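(* For every unweighted instance of the atomic two-stage facility location game and every facility placement profile $\mathbf{s}$, there exists a rounded client profile $\sigma(\mathbf{s})$.
   Context: Setting: a finite directed graph $H=(V,E)$ whose vertices are clients, all of weight $w(v)=1$ (unweighted); a finite set $F$ of facility agents; a facility placement profile $\mathbf{s}=(s_f)_{f\in F}$ with $s_f\in V$ (any feasibility restrictions on locations are irrelevant here). Let $N(v)=\{v\}\cup\{u:(v,u)\in E\}$, $N_{\mathbf{s}}(v)=\{f\in F:s_f\in N(v)\}$, $A_{\mathbf{s}}(f)=\{v: f\in N_{\mathbf{s}}(v)\}$, $A_{\mathbf{s}}(T)=\bigcup_{f\in T}A_{\mathbf{s}}(f)$, $w(X)=|X|$. A client profile $\sigma(\mathbf{s})$ assigns to each client $v$ numbers $\sigma(\mathbf{s})_{v,f}\in[0,1]$ with $\sigma(\mathbf{s})_{v,f}=0$ for $f\notin N_{\mathbf{s}}(v)$ and $\sum_f\sigma(\mathbf{s})_{v,f}=1$ whenever $N_{\mathbf{s}}(v)\neq\varnothing$. Load $\ell_f=\sum_v\sigma(\mathbf{s})_{v,f}w(v)$. Minimum neighborhood set: for nonempty $F^*\subseteq F$, $V^*\subseteq V$, $\mathrm{MNS}_{\mathbf{s}}(F^*,V^* )$ is the largest-cardinality subset among the nonempty $T\subseteq F^*$ minimizing $w(A_{\mathbf{s}}(T)\cap V^* )/|T|$. Class set: inductively, while facilities remain, $F_i=\mathrm{MNS}_{\mathbf{s}}(F\setminus\bigcup_{j<i}F_j, V\setminus\bigcup_{j<i}V_j)$, $V_i=A_{\mathbf{s}}(F_i)\setminus\bigcup_{j<i}V_j$,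 $C_i=(F_i,V_i)$, $\ell(C_i)=w(V_i)/|F_i|$. A client profile $\sigma(\mathbf{s})$ is rounded if for every class $C_i$ and every $f\in F_i$ we have $\ell_f\in\{\lfloor\ell(C_i)\rfloor,\lceil\ell(C_i)\rceil\}$, and for every class $C_i$ and every client $v\in V_i$ there is exactly one $g\in F_i$ with $\sigma(\mathbf{s})_{v,g}=1$. *)

From mathcomp Require Import all_boot all_order all_algebra.
Set Implicit Arguments. Unset Strict Implicit. Unset Printing Implicit Defensive.
Import Order.TTheory GRing.Theory Num.Theory.
Local Open Scope ring_scope.

Section FacilityGame.
Variables (V F : finType) (E : rel V) (s : F -> V).

Definition Nbh (v : V) : {set V} := [set u | (u == v) || E v u].
Definition Ns (v : V) : {set F} := [set f | s f \in Nbh v].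
Definition Att (f : F) : {set V} := [set v | f \in Ns v].
Definition AttS (T : {set F}) : {set V} := \bigcup_(f in T) Att f.

(* w(A_s(T) cap Vs) / #T, unweighted: w = cardinality *)
Definition nbh_ratio (T : {set F}) (Vs : {set V}) : rat :=
  #|AttS T :&: Vs|%:R / #|T|%:R.

Definition candidate (Fs : {set F}) (T : {set F}) : bool :=
  (T \subset Fs) && (T != set0).

Definition ratio_minimizer (Fs : {set F}) (Vs : {set V}) (T : {set F}) : Prop :=
  candidate Fs T /\
  forall T', candidate Fs T' -> nbh_ratio T Vs <= nbh_ratio T' Vs.

Definition is_MNS (Fs : {set F}) (Vs : {set V}) (T : {set F}) : Prop :=
  ratio_minimizer Fs Vs T /\
  forall T', ratio_minimizer Fs Vs T' -> (#|T'| <= #|T|)%N.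

(* [cs] is the class set C_1, C_2, ... computed from remaining facilities
   [Fr] and remaining clients [Vr]. *)
Fixpoint class_seq_from (Fr : {set F}) (Vr : {set V})
    (cs : seq ({set F} * {set V})) : Prop :=
  match cs with
  | [::] => Fr = set0
  | (Fi, Vi) :: cs' =>
      Fr != set0 /\ is_MNS Fr Vr Fi /\ Vi = AttS Fi :&: Vr /\
      class_seq_from (Fr :\: Fi) (Vr :\: Vi) cs'
  end.

Definition class_seq (cs : seq ({set F} * {set V})) : Prop :=
  class_seq_from setT setT cs.

Section Profiles.
Variable R : archiRealFieldType.

Definition client_profile (sigma : V -> F -> R) : Prop :=
  (forall v f, 0 <= sigma v f <= 1) /\
  (forall v f, f \notin Ns v -> sigma v f = 0) /\
  (forall v, Ns v != set0 -> \sum_(f : F) sigma v f = 1).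

(* load of f, all client weights equal to 1 *)
Definition load (sigma : V -> F -> R) (f : F) : R := \sum_(v : V) sigma v f.

Definition class_load (C : {set F} * {set V}) : R := #|C.2|%:R / #|C.1|%:R.

Definition rounded (sigma : V -> F -> R) : Prop :=
  forall cs, class_seq cs ->
  forall C, C \in cs ->
    (forall f, f \in C.1 ->
       load sigma f = (Num.floor (class_load C))%:~R \/
       load sigma f = (Num.ceil (class_load C))%:~R) /\
    (forall v, v \in C.2 -> #|[set g in C.1 | sigma v g == 1]| = 1%N).
End Profiles.
End FacilityGame.

From Pilot Require Import Defs.
From mathcomp Require Import all_boot all_order all_algebra.
From mathcomp Require Import zify.
Set Implicit Arguments. Unset Strict Implicit. Unset Printing Implicit Defensive.
Import Order.TTheory GRing.Theory Num.Theory.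

(* Inside a class (F_i, V_i), every set S of clients of V_i is adjacent to at
   least |S| |F_i| / |V_i| facilities of F_i: otherwise deleting those facilities
   from F_i would leave a set with a smaller neighbourhood ratio.  Give every
   facility ceil(l(C_i)) slots and pad V_i with dummy clients that may only use
   the slots beyond the first floor(l(C_i)); the bound above is then exactly
   Hall's condition.  A perfect matching loads every facility with
   floor(l(C_i)) or ceil(l(C_i)) real clients, and sending each client entirely
   to its matched facility yields a rounded profile.  The class set is unique
   because coverage is submodular, so ratio minimizers are closed under union. *)

Section HallMarriage.
Variables (A B : finType).
Implicit Types (adj : A -> B -> bool) (S X : {set A}) (h : A -> B).

Definition neighbours adj S : {set B} := [set b | [exists a in S, adj a b]].

Definition hall_condition adj X := forall S, S \subset X -> #|S| <= #|neighbours adj S|.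

Definition matching adj X h := {in X, forall a, adj a (h a)} /\ {in X &, injective h}.

Lemma neighboursP adj S b :
  reflect (exists2 a, a \in S & adj a b) (b \in neighbours adj S).
Proof.
rewrite inE; apply: (iffP existsP) => [[a /andP[]]|[a aS ab]]; first by exists a.
by exists a; rewrite aS.
Qed.

Lemma hall_conditionS adj X1 X2 :
  X1 \subset X2 -> hall_condition adj X2 -> hall_condition adj X1.
Proof. by move=> sX12 hall2 S sS; apply/hall2/(subset_trans sS). Qed.

Lemma matching_sub adj adj' X h :
  (forall a b, adj' a b -> adj a b) -> matching adj' X h -> matching adj X h.
Proof. by move=> sub [adjh injh]; split=> // a /adjh/sub. Qed.

Lemma matching_glue adj X1 X2 h1 h2 :
  matching adj X1 h1 -> matching adj X2 h2 ->
  {in X1 & X2, forall a1 a2, h1 a1 != h2 a2} ->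
  matching adj (X1 :|: X2) (fun a => if a \in X1 then h1 a else h2 a).
Proof.
move=> [adj1 inj1] [adj2 inj2] disj12; split=> [a|a1 a2].
  by rewrite inE; case: ifP => [aX1 _|_ /= aX2]; [apply: adj1|apply: adj2].
rewrite !inE; case: ifP => a1X1; case: ifP => a2X2 //= a1X a2X.
- exact: inj1.
- by move=> e; case/negP: (disj12 a1 a2 a1X1 a2X); rewrite e.
- by move=> e; case/negP: (disj12 a2 a1 a2X2 a1X); rewrite e.
- exact: inj2.
Qed.

Definition hall_upto n :=
  forall adj X, #|X| <= n -> hall_condition adj X -> exists h, matching adj X h.

Section InductionStep.
Variables (n : nat) (adj : A -> B -> bool) (X : {set A}).
Hypotheses (IH : hall_upto n) (card_X : #|X| <= n.+1) (hallX : hall_condition adj X).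

(* A nonempty proper subset [S0] with exactly as many neighbours as elements is
   matched onto its neighbourhood; the rest of [X] then avoids that neighbourhood. *)
Lemma hall_tight_step S0 :
  S0 \proper X -> S0 != set0 -> #|neighbours adj S0| <= #|S0| ->
  exists h, matching adj X h.
Proof.
move=> ltS0X S0_neq0 tightS0; have sS0X := proper_sub ltS0X.
have S0_gt0 : 0 < #|S0| by rewrite card_gt0.
have [h1 match1] : exists h, matching adj S0 h.
  apply: IH; last exact: hall_conditionS hallX.
  by have := proper_card ltS0X; lia.
set N0 := neighbours adj S0 in tightS0 *.
pose adj2 a b := adj a b && (b \notin N0).
have [h2 match2] : exists h, matching adj2 (X :\: S0) h.
  apply: IH => [|S sS]; first by rewrite cardsDS //; lia.
  have /andP[sSX disjS] : (S \subset X) && [disjoint S & S0] by rewrite -subsetD.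
  have := @hallX (S :|: S0); rewrite subUset sSX sS0X => /(_ isT).
  rewrite cardsU (disjoint_setI0 disjS) cards0 subn0.
  have : neighbours adj (S :|: S0) \subset neighbours adj2 S :|: N0.
    apply/subsetP => b /neighboursP[a]; rewrite !in_setU => /orP[aS|aS0] ab.
      case bN0: (b \in N0); rewrite ?orbT // orbF.
      by apply/neighboursP; exists a; rewrite // /adj2 ab bN0.
    by rewrite (_ : b \in N0) ?orbT //; apply/neighboursP; exists a.
  by move/subset_leq_card; rewrite cardsU; lia.
have disj12 : {in S0 & X :\: S0, forall a1 a2, h1 a1 != h2 a2}.
  move=> a1 a2 a1S0 a2X; have /andP[_] := match2.1 a2 a2X; apply: contra => /eqP<-.
  by apply/neighboursP; exists a1; last exact: match1.1.
have match2' : matching adj (X :\: S0) h2 by apply: matching_sub match2 => a b /andP[].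
exists (fun a => if a \in S0 then h1 a else h2 a).
by rewrite -(setID X S0) (setIidPr sS0X); apply: matching_glue.
Qed.

(* Otherwise every nonempty proper subset has a spare neighbour, so any edge
   [x -- y] can be used and [y] removed from the graph. *)
Lemma hall_slack_step x :
  x \in X -> (forall S, S \proper X -> S != set0 -> #|S| < #|neighbours adj S|) ->
  exists h, matching adj X h.
Proof.
move=> xX slack.
have [y /neighboursP[_ /set1P-> xy]] : exists y, y \in neighbours adj [set x].
  by apply/card_gt0P; have := @hallX [set x]; rewrite sub1set xX cards1; apply.
have match1 : matching adj [set x] (fun _ => y).
  by split=> [a /set1P->|a1 a2 /set1P-> /set1P->].
pose adj2 a b := adj a b && (b != y).
have [h2 match2] : exists h, matching adj2 (X :\ x) h.
  apply: IH => [|S sS]; first by move: card_X; rewrite (cardsD1 x X) xX; lia.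
  have [->|S_neq0] := eqVneq S set0; first by rewrite cards0.
  have ltSX : S \proper X.
    apply: sub_proper_trans sS _; apply/properP; split; first exact: subsetDl.
    by exists x; rewrite // !inE eqxx.
  have : neighbours adj S \subset y |: neighbours adj2 S.
    apply/subsetP => b /neighboursP[a aS ab]; rewrite in_setU1.
    by case: eqVneq => //= neq_by; apply/neighboursP; exists a; rewrite // /adj2 ab.
  by move/subset_leq_card; rewrite cardsU1; have := slack S ltSX S_neq0; lia.
have disj12 : {in [set x] & X :\ x, forall a1 a2, y != h2 a2}.
  by move=> a1 a2 _ /match2.1 /andP[_]; rewrite eq_sym.
have match2' : matching adj (X :\ x) h2 by apply: matching_sub match2 => a b /andP[].
exists (fun a => if a \in [set x] then y else h2 a).
by rewrite -(setD1K xX); apply: matching_glue.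
Qed.

End InductionStep.

Lemma hall_upto_all (b0 : B) n : hall_upto n.
Proof.
have match0 adj : matching adj set0 (fun _ => b0) by split=> [a|a1 a2]; rewrite inE.
elim: n => [|n IH] adj X card_X hallX.
  by move: card_X; rewrite leqn0 cards_eq0 => /eqP->; exists (fun _ => b0).
have [->|[x xX]] := set_0Vmem X; first by exists (fun _ => b0).
have [/existsP[S0 /and3P[]]|/existsPn noTight] :=
  boolP [exists S0 : {set A}, [&& S0 \proper X, S0 != set0 & #|neighbours adj S0| <= #|S0|]].
  exact: hall_tight_step IH card_X hallX S0.
apply: (hall_slack_step IH card_X hallX xX) => S ltSX S_neq0.
by have := noTight S; rewrite ltSX S_neq0 /= -ltnNge.
Qed.

Theorem hall_marriage (b0 : B) adj X :
  hall_condition adj X -> exists h, matching adj X h.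
Proof. exact: hall_upto_all b0 #|X| adj X (leqnn _). Qed.

End HallMarriage.

(* [n %/ m + (n %% m != 0)] is the ceiling of [n / m]. *)
Definition balanced (n m l : nat) := n %/ m <= l <= n %/ m + (n %% m != 0).

Lemma card_ord_lt c q : q <= c -> #|[set j : 'I_c | j < q]| = q.
Proof.
move=> le_qc; have -> : [set j : 'I_c | j < q] = widen_ord le_qc @: [set: 'I_q].
  apply/setP => j; rewrite inE; apply/idP/imsetP => [lt_jq|[i _ ->]]; last exact: (ltn_ord i).
  by exists (Ordinal lt_jq); last exact: val_inj.
have widen_inj : injective (widen_ord le_qc) by move=> i1 i2 /(congr1 val) eq12; apply: val_inj.
by rewrite (card_imset _ widen_inj) cardsT card_ord.
Qed.

Lemma card_sum_set_le (A B : finType) (S : {set A + B}) :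
  #|S| <= #|[set a | inl a \in S]| + #|[set b | inr b \in S]|.
Proof.
have : S \subset inl @: [set a | inl a \in S] :|: inr @: [set b | inr b \in S].
  apply/subsetP => -[a|b] xS; rewrite in_setU; apply/orP.
    by left; apply/imsetP; exists a; rewrite ?inE.
  by right; apply/imsetP; exists b; rewrite ?inE.
move/subset_leq_card/leq_trans; apply.
by rewrite (leq_trans (leq_card_setU _ _)) // !card_imset //; [apply: inr_inj|apply: inl_inj].
Qed.

Section BalancedAssignment.
Variables (V F : finType) (adj : V -> F -> bool) (X : {set V}) (Fi : {set F}).
Implicit Types S : {set V}.
Hypothesis Fi_neq0 : Fi != set0.
Hypothesis expansion :
  forall S, S \subset X -> #|S| * #|Fi| <= #|X| * #|Fi :&: neighbours adj S|.

Local Notation n := #|X|.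
Local Notation m := #|Fi|.
Local Notation q := (n %/ m).
Local Notation c := (n %/ m + (n %% m != 0)).
Local Notation k := (c * m - n).

Lemma card_Fi_gt0 : 0 < m. Proof. by rewrite card_gt0. Qed.

Lemma le_clients_slots : n <= c * m.
Proof.
rewrite {1}(divn_eq n m) mulnDl leq_add2l.
by case: eqP => [->|_] //; rewrite mul1n ltnW // ltn_pmod // card_Fi_gt0.
Qed.

Lemma expansion_ceil S : S \subset X -> #|S| <= c * #|Fi :&: neighbours adj S|.
Proof.
move=> sSX; rewrite -(leq_pmul2r card_Fi_gt0); apply: leq_trans (expansion sSX) _.
by rewrite mulnAC leq_mul2r le_clients_slots orbT.
Qed.

Lemma expansion_floor S :
  S \subset X -> #|S| <= q * #|Fi :&: neighbours adj S| + n %% m.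
Proof.
move=> sSX; rewrite -(leq_pmul2r card_Fi_gt0); apply: leq_trans (expansion sSX) _.
rewrite {1}(divn_eq n m) !mulnDl mulnAC leq_add2l leq_mul2l.
by rewrite subset_leq_card ?subsetIl ?orbT.
Qed.

(* Every facility of [Fi] gets [c] slots.  Besides the real clients there are
   [k] dummy clients, which may only take slots of index at least [q]. *)
Definition slot_adj (x : V + 'I_k) (p : F * 'I_c) :=
  (p.1 \in Fi) && (if x is inl v then adj v p.1 else q <= p.2).

Definition padded_clients : {set V + 'I_k} := inl @: X :|: inr @: [set: 'I_k].

Definition low_slots : {set 'I_c} := [set j : 'I_c | j < q].

Lemma card_low_slots : #|low_slots| = q.
Proof. exact/card_ord_lt/leq_addr. Qed.

Lemma card_high_slots : #|~: low_slots| = (n %% m != 0).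
Proof. by have := cardsC low_slots; rewrite card_low_slots card_ord; lia. Qed.

Lemma mem_padded_inl v : (inl v \in padded_clients) = (v \in X).
Proof.
rewrite in_setU (mem_imset _ _ inl_inj).
by case: imsetP => [[]|_]; rewrite ?orbF.
Qed.

Lemma card_padded_clients : #|padded_clients| = c * m.
Proof.
have disj : inl @: X :&: inr @: [set: 'I_k] = set0.
  by apply/setP => x; rewrite !inE; apply/andP => -[/imsetP[v _ ->] /imsetP[]].
rewrite cardsU disj cards0 (card_imset _ inl_inj) (card_imset _ inr_inj).
by rewrite cardsT card_ord; have := le_clients_slots; lia.
Qed.

Lemma slot_neighbours_inl (S : {set V + 'I_k}) :
  setX (Fi :&: neighbours adj [set v | inl v \in S]) [set: 'I_c]
    \subset neighbours slot_adj S.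
Proof.
apply/subsetP => -[f j]; rewrite in_setX in_setI in_setT andbT.
move=> /andP[fFi /neighboursP[v vS vf]].
by apply/neighboursP; exists (inl v); [rewrite inE in vS|rewrite /slot_adj /= fFi].
Qed.

Lemma slot_neighbours_inr (S : {set V + 'I_k}) i :
  inr i \in S -> setX Fi (~: low_slots) \subset neighbours slot_adj S.
Proof.
move=> iS; apply/subsetP => -[f j]; rewrite in_setX => /andP[/= fFi jL].
have le_qj : q <= j by move: jL; rewrite !inE -leqNgt.
by apply/neighboursP; exists (inr i); rewrite // /slot_adj /= fFi.
Qed.

Lemma slot_hall_condition : hall_condition slot_adj padded_clients.
Proof.
move=> S sS; set Sv := [set v | inl v \in S]; set T := Fi :&: neighbours adj Sv.
have SvX : Sv \subset X.
  by apply/subsetP => v; rewrite inE => /(subsetP sS); rewrite mem_padded_inl.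
have := card_sum_set_le S; rewrite -/Sv.
have [->|/set0Pn[i]] := eqVneq [set i | inr i \in S] set0.
  rewrite cards0 addn0 => /leq_trans; apply; apply: leq_trans (expansion_ceil SvX) _.
  by have := subset_leq_card (slot_neighbours_inl S); rewrite cardsX cardsT card_ord mulnC.
rewrite inE => iS.
have card_D : #|[set i | inr i \in S]| <= k.
  by have := max_card [set i | inr i \in S]; rewrite card_ord.
have disjN : setX T low_slots :&: setX Fi (~: low_slots) = set0.
  by apply/setP => -[f j]; rewrite !inE /=; case: (j < q); rewrite !andbF.
have : setX T low_slots :|: setX Fi (~: low_slots) \subset neighbours slot_adj S.
  rewrite subUset (slot_neighbours_inr iS) andbT.
  exact: subset_trans (setXS (subxx _) (subsetT _)) (slot_neighbours_inl S).
move/subset_leq_card => le_UN /leq_trans; apply; apply: leq_trans le_UN.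
rewrite cardsU disjN cards0 subn0 !cardsX card_low_slots card_high_slots.
have := expansion_floor SvX; rewrite -/T; have := le_clients_slots; have := divn_eq n m.
(* [q |T| + r + (c m - n) = q |T| + m [r != 0]], as [n = q m + r]. *)
move: card_D; move: #|[set i | inr i \in S]| => d.
move: (n %% m != 0) (n %/ m) (n %% m) => b q' r; lia.
Qed.

Section SlotMatching.
Variable h : V + 'I_k -> F * 'I_c.
Hypothesis match_h : matching slot_adj padded_clients h.

Lemma matching_onto f j : f \in Fi -> exists2 x, x \in padded_clients & h x = (f, j).
Proof.
move=> fFi; have : (f, j) \in h @: padded_clients.
  suff -> : h @: padded_clients = setX Fi [set: 'I_c] by rewrite in_setX fFi in_setT.
  apply/eqP; rewrite eqEcard (card_in_imset match_h.2) card_padded_clients.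
  rewrite cardsX cardsT card_ord [leqRHS]mulnC leqnn andbT.
  apply/subsetP => _ /imsetP[x xP ->]; rewrite !inE andbT.
  by have /andP[] := match_h.1 x xP.
by case/imsetP => x xP ->; exists x.
Qed.

Lemma card_load_le f : #|[set v in X | (h (inl v)).1 == f]| <= c.
Proof.
rewrite -[leqRHS]card_ord -(@card_in_imset _ _ (fun v => (h (inl v)).2)) ?max_card //.
move=> v w; rewrite !inE => /andP[vX /eqP hv] /andP[wX /eqP hw] eq2.
have : h (inl v) = h (inl w) by apply: injective_projections; rewrite ?hv ?hw.
by move/match_h.2; rewrite !mem_padded_inl => /(_ vX wX) [].
Qed.

Lemma card_load_ge f : f \in Fi -> q <= #|[set v in X | (h (inl v)).1 == f]|.
Proof.
move=> fFi; set L := [set v in X | _].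
have : low_slots \subset [set (h (inl v)).2 | v in L].
  apply/subsetP => j; rewrite inE => lt_jq.
  have [[v|i] xP hx] := matching_onto j fFi.
    by apply/imsetP; exists v; rewrite ?hx // inE -mem_padded_inl xP hx /=.
  by have /andP[_] := match_h.1 _ xP; rewrite hx /= leqNgt lt_jq.
move/subset_leq_card; rewrite card_low_slots => /leq_trans; apply.
exact: leq_imset_card.
Qed.

End SlotMatching.

Theorem balanced_assignment : exists g : V -> F,
  {in X, forall v, g v \in Fi /\ adj v (g v)} /\
  {in Fi, forall f, balanced n m #|[set v in X | g v == f]|}.
Proof.
have /set0Pn[f0 f0Fi] := Fi_neq0.
have [X0|X_neq0] := eqVneq X set0.
  exists (fun _ => f0); rewrite X0 /balanced cards0 div0n; split=> [v|f _]; first by rewrite inE.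
  by rewrite (@eq_card0 _ [set v in set0 | _]) // => v; rewrite !inE.
have c_gt0 : 0 < c.
  rewrite lt0n; apply/eqP => c0; move: le_clients_slots; rewrite c0 mul0n leqn0 cards_eq0.
  exact/negP.
have [h match_h] := hall_marriage (f0, Ordinal c_gt0) slot_hall_condition.
exists (fun v => (h (inl v)).1); split=> [v vX|f fFi].
  by rewrite -mem_padded_inl in vX; have /andP[] := match_h.1 _ vX.
by apply/andP; split; [exact: card_load_ge | exact: card_load_le].
Qed.

End BalancedAssignment.

Section ClassSet.
Variables (V F : finType) (E : rel V) (s : F -> V).
Implicit Types (T Fr Fi : {set F}) (Vr : {set V}) (C : {set F} * {set V}).
Implicit Types (cs : seq ({set F} * {set V})) (a : V -> option F).

Local Notation Ns := (Ns E s).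
Local Notation AttS := (AttS E s).
Local Notation ratio := (nbh_ratio E s).
Local Notation minimizer := (ratio_minimizer E s).
Local Notation MNS := (is_MNS E s).

Lemma AttSP T v : reflect (exists2 f, f \in T & f \in Ns v) (v \in AttS T).
Proof.
apply: (iffP bigcupP) => [[f fT]|[f fT fN]]; first by rewrite inE; exists f.
by exists f; rewrite // inE.
Qed.

Lemma AttSS T1 T2 : T1 \subset T2 -> AttS T1 \subset AttS T2.
Proof.
move=> sT12; apply/subsetP => v /AttSP[f fT fN]; apply/AttSP.
by exists f; rewrite ?(subsetP sT12).
Qed.

Lemma nbh_ratio_le T1 T2 Vr : T1 != set0 -> T2 != set0 ->
  (ratio T1 Vr <= ratio T2 Vr)%R =
  (#|AttS T1 :&: Vr| * #|T2| <= #|AttS T2 :&: Vr| * #|T1|).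
Proof.
rewrite -!card_gt0 => T1_gt0 T2_gt0.
rewrite /nbh_ratio ler_pdivrMr ?ltr0n // mulrAC ler_pdivlMr ?ltr0n //.
by rewrite -!natrM ler_nat.
Qed.

(* The coverage [T |-> #|AttS T :&: Vr|] is submodular. *)
Lemma minimizerU Fr Vr T1 T2 :
  minimizer Fr Vr T1 -> minimizer Fr Vr T2 -> minimizer Fr Vr (T1 :|: T2).
Proof.
move=> [cand1 min1] [cand2 min2].
have /andP[sT1 T1_neq0] := cand1; have /andP[sT2 T2_neq0] := cand2.
have candU : candidate Fr (T1 :|: T2).
  by rewrite /candidate subUset sT1 sT2 setU_eq0 negb_and T1_neq0.
split=> // T candT; apply: le_trans (min1 _ candT).
have /andP[_ U_neq0] := candU; rewrite nbh_ratio_le //.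
set a1 := #|AttS T1 :&: Vr|; set a2 := #|AttS T2 :&: Vr|.
set aU := #|AttS (T1 :|: T2) :&: Vr|; set aI := #|AttS (T1 :&: T2) :&: Vr|.
have eq12 : a1 * #|T2| = a2 * #|T1|.
  by apply/eqP; rewrite eqn_leq -!nbh_ratio_le // min1 ?min2.
have submod : aU + aI <= a1 + a2.
  rewrite /a1 /a2 -cardsUI -setIUl -setIIl /aU /Defs.AttS bigcup_setU leq_add2l.
  by apply/subset_leq_card/setSI; rewrite subsetI !AttSS ?subsetIl ?subsetIr.
have minI : a1 * #|T1 :&: T2| <= aI * #|T1|.
  have [->|I_neq0] := eqVneq (T1 :&: T2) set0; first by rewrite cards0 muln0.
  rewrite -nbh_ratio_le // min1 // /candidate I_neq0 andbT.
  exact: subset_trans (subsetIl _ _) sT1.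
have := cardsUI T1 T2; nia.
Qed.

Lemma MNS_unique Fr Vr T1 T2 : MNS Fr Vr T1 -> MNS Fr Vr T2 -> T1 = T2.
Proof.
move=> [min1 max1] [min2 max2]; have minU := minimizerU min1 min2.
have /eqP-> : T1 == T1 :|: T2 by rewrite eqEcard subsetUl max1.
by apply/esym/eqP; rewrite eqEcard subsetUr max2.
Qed.

Lemma MNS_exists Fr Vr : Fr != set0 -> exists T, MNS Fr Vr T.
Proof.
move=> Fr_neq0; have candFr : candidate Fr Fr by rewrite /candidate subxx.
have [T0 candT0 minT0] := arg_minP (fun T => ratio T Vr) candFr.
pose P T := candidate Fr T && (ratio T Vr <= ratio T0 Vr)%R.
have [|T /andP[candT leT] maxT] := @arg_maxnP _ T0 P (fun T => #|T|).
  by rewrite /P candT0 lexx.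
exists T; split=> [|T' [candT' minT']]; last by apply: maxT; rewrite /P candT' minT'.
by split=> // T' /minT0; apply: le_trans.
Qed.

Lemma class_seq_from_exists Fr Vr : exists cs, class_seq_from E s Fr Vr cs.
Proof.
elim: {Fr}#|Fr| {-2}Fr (leqnn #|Fr|) Vr => [|n IH] Fr le_Fr Vr.
  by exists [::]; apply/eqP; rewrite -cards_eq0 -leqn0.
have [->|Fr_neq0] := eqVneq Fr set0; first by exists [::].
have [T MNS_T] := MNS_exists Vr Fr_neq0.
have [[/andP[sT T_neq0] _] _] := MNS_T.
have [|cs class_cs] := IH (Fr :\: T) _ (Vr :\: (AttS T :&: Vr)).
  by rewrite cardsDS // -card_gt0 in T_neq0 *; lia.
by exists ((T, AttS T :&: Vr) :: cs).
Qed.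

Lemma class_seq_from_unique Fr Vr cs1 cs2 :
  class_seq_from E s Fr Vr cs1 -> class_seq_from E s Fr Vr cs2 -> cs1 = cs2.
Proof.
elim: cs1 Fr Vr cs2 => [|[F1 V1] cs1 IH] Fr Vr [|[F2 V2] cs2] //=.
- by move=> -> []; rewrite eqxx.
- by move=> [Fr_neq0 _] Fr0; rewrite Fr0 eqxx in Fr_neq0.
move=> [_ [MNS1 [-> class1]]] [_ [MNS2 [-> class2]]].
by rewrite -(MNS_unique MNS1 MNS2) in class2 *; rewrite (IH _ _ _ class1 class2).
Qed.

Lemma mem_class_seq_from Fr Vr cs C : class_seq_from E s Fr Vr cs -> C \in cs ->
  C.1 \subset Fr /\ C.2 \subset Vr.
Proof.
elim: cs Fr Vr => [|[Fi Vi] cs IH] Fr Vr //= [_ [[[/andP[sFi _] _] _] [-> class_cs]]].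
rewrite inE => /orP[/eqP-> /=|/(IH _ _ class_cs) [sF sV]]; first by rewrite sFi subsetIr.
by split; [apply: subset_trans sF (subsetDl _ _)|apply: subset_trans sV (subsetDl _ _)].
Qed.

Local Notation serves := (fun v f => f \in Ns v).

(* Removing from [Fi] the facilities [T] adjacent to [S] leaves a candidate
   whose clients avoid [S]; minimality of [Fi] bounds their number from below. *)
Lemma minimizer_expansion Fr Vr Fi (S : {set V}) :
  minimizer Fr Vr Fi -> S \subset AttS Fi :&: Vr ->
  #|S| * #|Fi| <= #|AttS Fi :&: Vr| * #|Fi :&: neighbours serves S|.
Proof.
move=> [/andP[sFi Fi_neq0] minFi] sS.
set T := Fi :&: _; set W := AttS (Fi :\: T) :&: Vr.
have disjSW : S :&: W = set0.
  apply/setP => v; rewrite in_set0 !in_setI; apply/andP => -[vS /andP[/AttSP[f]]].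
  rewrite in_setD => /andP[fT fFi] fNv _; case/negP: fT; rewrite in_setI fFi /=.
  by apply/neighboursP; exists v.
have card_SW : #|S| + #|W| <= #|AttS Fi :&: Vr|.
  have : S :|: W \subset AttS Fi :&: Vr by rewrite subUset sS setSI // AttSS // subsetDl.
  by move/subset_leq_card; rewrite cardsU disjSW cards0 subn0.
have card_T : #|Fi :\: T| = #|Fi| - #|T| by rewrite cardsDS ?subsetIl.
have le_T : #|T| <= #|Fi| by rewrite subset_leq_card ?subsetIl.
have [D0|D_neq0] := eqVneq (Fi :\: T) set0.
  by move: card_T; rewrite D0 cards0; nia.
have := minFi (Fi :\: T); rewrite /candidate D_neq0 (subset_trans (subsetDl _ _) sFi).
by rewrite nbh_ratio_le // -/W => /(_ isT); nia.
Qed.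

Definition class_assignment Fr Vr cs a :=
  [/\ forall v f, a v = Some f -> [/\ f \in Fr, v \in Vr & f \in Ns v],
      forall v f, v \in Vr -> f \in Fr -> f \in Ns v -> a v != None,
      forall C, C \in cs ->
        {in C.1, forall f, balanced #|C.2| #|C.1| #|[set v | a v == Some f]|} &
      forall C, C \in cs -> {in C.2, forall v, exists2 g, g \in C.1 & a v = Some g}].

Lemma class_assignment_cons Fr Vr Fi Vi cs a :
  class_seq_from E s Fr Vr ((Fi, Vi) :: cs) ->
  class_assignment (Fr :\: Fi) (Vr :\: Vi) cs a ->
  exists a', class_assignment Fr Vr ((Fi, Vi) :: cs) a'.
Proof.
move=> [_ [[minFi _] [eVi class_cs]]] [a_dom a_total a_bal a_cls].
have [/andP[sFi Fi_neq0] _] := minFi.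
have [g [g_dom g_bal]] := balanced_assignment Fi_neq0 (fun S => minimizer_expansion minFi).
rewrite -eVi in g_dom g_bal.
exists (fun v => if v \in Vi then Some (g v) else a v).
have a_out v f : a v = Some f -> (f \in Fi) = false /\ (v \in Vi) = false.
  by case/a_dom; rewrite !inE => /andP[/negPf-> _] /andP[/negPf-> _].
split=> [v f|v f vVr fFr fNv|C|C].
- case: ifP => [vVi [<-]|vVi /a_dom]; last by rewrite !inE => -[/andP[_ ->] /andP[_ ->]].
  have [gFi gN] := g_dom v vVi; move: vVi; rewrite eVi in_setI => /andP[_ vVr].
  by split=> //; apply: (subsetP sFi).
- case: ifP => // vVi.
  have fFi : f \notin Fi.
    by apply: (contraFN _ vVi) => fFi; rewrite eVi in_setI vVr andbT; apply/AttSP; exists f.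
  by apply: (a_total v f) fNv; rewrite in_setD ?vVi ?vVr ?fFr ?fFi.
- rewrite inE => /predU1P[-> f fFi /=|Ccs f fC].
    suff -> : [set v | (if v \in Vi then Some (g v) else a v) == Some f] =
              [set v in Vi | g v == f] by exact: g_bal.
    apply/setP => v; rewrite !inE.
    by case: ifP => vVi //=; apply/eqP => /a_out[]; rewrite fFi.
  have [/subsetP sC1 /subsetP sC2] := mem_class_seq_from class_cs Ccs.
  have /andP[fFi _] : (f \notin Fi) && (f \in Fr) by rewrite -in_setD sC1.
  suff -> : [set v | (if v \in Vi then Some (g v) else a v) == Some f] =
            [set v | a v == Some f] by exact: a_bal.
  apply/setP => v; rewrite !inE; case: ifP => //= vVi.
  have [gFi _] := g_dom v vVi; rewrite (_ : a v == Some f = false).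
    by apply: contraNF fFi => /eqP [<-].
  by apply/eqP => /a_out[_]; rewrite vVi.
rewrite inE => /predU1P[-> v vVi /=|Ccs v vC].
  by rewrite vVi; exists (g v); case: (g_dom v vVi).
have [_ /subsetP sC2] := mem_class_seq_from class_cs Ccs.
have /andP[/negPf-> _] : (v \notin Vi) && (v \in Vr) by rewrite -in_setD sC2.
exact: a_cls.
Qed.

Lemma class_assignment_exists Fr Vr cs :
  class_seq_from E s Fr Vr cs -> exists a, class_assignment Fr Vr cs a.
Proof.
elim: cs Fr Vr => [|[Fi Vi] cs IH] Fr Vr class_cs.
  by exists (fun _ => None); rewrite class_cs; split=> // v f; rewrite inE.
have [_ [_ [_ /IH[a class_a]]]] := class_cs.
exact: class_assignment_cons class_cs class_a.
Qed.

End ClassSet.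

Local Open Scope ring_scope.

Section Rounding.
Variable R : archiRealFieldType.

Lemma floor_divn (n m : nat) : (0 < m)%N ->
  Num.floor (n%:R / m%:R : R) = (n %/ m)%N.
Proof.
move=> m_gt0; apply: floor_def; rewrite -PoszD -!pmulrn.
rewrite ler_pdivlMr ?ltr_pdivrMr ?ltr0n // -!natrM ler_nat ltr_nat.
by rewrite leq_divM addn1 ltn_ceil.
Qed.

Lemma ceil_divn (n m : nat) : (0 < m)%N -> (n %% m != 0)%N ->
  Num.ceil (n%:R / m%:R : R) = (n %/ m).+1.
Proof.
move=> m_gt0 r_neq0; apply: ceil_def; rewrite -addn1 PoszD addrK -!pmulrn.
rewrite ltr_pdivlMr ?ler_pdivrMr ?ltr0n // -!natrM ltr_nat ler_nat addn1.
apply/andP; split; last exact/ltnW/ltn_ceil.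
by rewrite {2}(divn_eq n m) -[X in (X < _)%N]addn0 ltn_add2l lt0n.
Qed.

Lemma balanced_floor_ceil (n m l : nat) : (0 < m)%N -> balanced n m l ->
  (l%:R : R) = (Num.floor (n%:R / m%:R : R))%:~R \/
  (l%:R : R) = (Num.ceil (n%:R / m%:R : R))%:~R.
Proof.
move=> m_gt0 /andP[le_ql le_lc]; rewrite floor_divn // -pmulrn.
have [->|ne_lq] := eqVneq l (n %/ m)%N; first by left.
have r_neq0 : (n %% m != 0)%N.
  by apply: contra ne_lq => /eqP r0; move: le_lc; rewrite r0; lia.
by right; rewrite ceil_divn // -pmulrn; congr _%:R; move: le_lc; rewrite r_neq0; lia.
Qed.

Section Indicator.
Variables (V F : finType) (E : rel V) (s : F -> V) (a : V -> option F).

Definition indicator : V -> F -> R := fun v f => (a v == Some f)%:R.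

Lemma client_profile_indicator :
  (forall v f, a v = Some f -> f \in Ns E s v) ->
  (forall v, Ns E s v != set0 -> a v != None) ->
  client_profile E s indicator.
Proof.
move=> a_dom a_total; split=> [v f|]; first by rewrite ler0n lern1 leq_b1.
split=> [v f fN|v /a_total].
  by rewrite /indicator; case: eqP => // /a_dom; rewrite (negPf fN).
case av : (a v) => [g|] // _; rewrite (bigD1 g) //= /indicator av eqxx big1 ?addr0 //.
by move=> f ne_fg; rewrite (inj_eq Some_inj) eq_sym (negPf ne_fg).
Qed.

Lemma load_indicator f : load indicator f = #|[set v | a v == Some f]|%:R.
Proof.
rewrite /load -natr_sum -sum1_card; congr _%:R; rewrite [RHS]big_mkcond.
by apply: eq_bigr => v _; rewrite inE; case: (_ == _).
Qed.

Lemma card_indicator_eq1 (A : {set F}) v g :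
  g \in A -> a v = Some g -> #|[set f in A | indicator v f == 1]| = 1%N.
Proof.
move=> gA av; suff -> : [set f in A | indicator v f == 1] = [set g] by rewrite cards1.
apply/setP => f; rewrite !inE /indicator pnatr_eq1 eqb1 av (inj_eq Some_inj) eq_sym.
by apply: andb_idl => /eqP->.
Qed.

End Indicator.
End Rounding.

Theorem mainTheorem10 (R : archiRealFieldType) (V F : finType) (E : rel V)
    (s : F -> V) :
  exists sigma : V -> F -> R,
    client_profile E s sigma /\ rounded E s sigma.
Proof.
have [cs class_cs] := class_seq_from_exists E s setT setT.
have [a [a_dom a_total a_bal a_cls]] := class_assignment_exists class_cs.
exists (indicator R a); split.
  apply: client_profile_indicator => [v f /a_dom[] //|v /set0Pn[f fN]].
  exact: a_total (in_setT v) (in_setT f) fN.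
move=> cs' /(class_seq_from_unique class_cs) <- C Ccs; split=> [f fC|v vC].
  rewrite load_indicator; apply: balanced_floor_ceil (a_bal C Ccs f fC).
  by apply/card_gt0P; exists f.
by have [g gC av] := a_cls C Ccs v vC; exact: card_indicator_eq1 gC av.
Qed.
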